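(* Let $n\ge 1$, $k\ge 1$ be integers, let $\lambda\in\mathbb{F}_{2^n}^*$, and let $f:\mathbb{F}_{2^n}\to\mathbb{F}_2$ be given by $f(x)=Tr(\lambda x^{2^k+1})$. Then $f$ is negabent if and only if $$\lambda^{2^{n-k}}a^{2^{n-k}}+\lambda a^{2^k}+a\neq 0\quad\text{for all } a\in\mathbb{F}_{2^n}^*.$$
   Context: $Tr=Tr_1^n:\mathbb{F}_{2^n}\to\mathbb{F}_2$ is the absolute trace, $Tr(x)=x+x^2+\dots+x^{2^{n-1}}$. Fix a self-dual basis $\{\alpha_1,\dots,\alpha_n\}$ of $\mathbb{F}_{2^n}$ over $\mathbb{F}_2$ (i.e. $Tr(\alpha_i\alpha_j)=\delta_{ij}$) and identify $x=\sum x_i\alpha_i$ with $(x_1,\dots,x_n)\in\mathbb{F}_2^n$, so that $Tr(xy)=\sum_i x_iy_i$; let $wt(x)$ be the number of nonzero coordinates $x_i$. For $f:\mathbb{F}_{2^n}\to\mathbb{F}_2$ the nega-Hadamard transform is $\mathcal{N}_f(\mu)=2^{-n/2}\sum_{x\in\mathbb{F}_{2^n}}(-1)^{f(x)+Tr(\mu x)}\,\mathrm{i}^{wt(x)}$ with $\mathrm{i}=\sqrt{-1}$, and $f$ is called negabent if $|\mathcal{N}_f(\mu)|=1$ for all $\mu\in\mathbb{F}_{2^n}$. *)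

From mathcomp Require Import all_boot all_order all_algebra all_field.
Set Implicit Arguments. Unset Strict Implicit. Unset Printing Implicit Defensive.
Import Order.TTheory GRing.Theory Num.Theory.
Local Open Scope ring_scope.

(* F plays the role of F_{2^n} (a finite field with #|F| = 2^n). *)

Definition Tr (F : finFieldType) (n : nat) (x : F) : F :=
  \sum_(i < n) x ^+ (2 ^ i).

(* the value Tr(x) in F_2, read as a boolean (Tr x is 0 or 1) *)
Definition trb (F : finFieldType) (n : nat) (x : F) : bool := Tr n x == 1.

Definition self_dual (F : finFieldType) (n : nat) (alpha : 'I_n -> F) : Prop :=
  forall i j : 'I_n, Tr n (alpha i * alpha j) = (i == j)%:R.

Definition coordinates (F : finFieldType) (n : nat) (alpha : 'I_n -> F)
  (coord : F -> 'I_n -> bool) : Prop :=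
  forall x : F, x = \sum_(i < n) (coord x i)%:R * alpha i.

Definition wt (F : finFieldType) (n : nat) (coord : F -> 'I_n -> bool) (x : F) : nat :=
  #|[set i : 'I_n | coord x i]|.

Definition nega_hadamard (F : finFieldType) (n : nat) (coord : F -> 'I_n -> bool)
  (f : F -> bool) (mu : F) : algC :=
  (sqrtC (2 ^+ n))^-1 *
  \sum_(x : F) (-1) ^+ (f x (+) trb n (mu * x)) * 'i ^+ (wt coord x).

Definition negabent (F : finFieldType) (n : nat) (coord : F -> 'I_n -> bool)
  (f : F -> bool) : Prop :=
  forall mu : F, `|nega_hadamard coord f mu| = 1.

(* Expanding |N_f(mu)|^2 as a double sum and substituting y = x + a, the self-dual
   basis gives i^wt(x) * conj (i^wt(x+a)) = (-i)^wt(a) (-1)^Tr(xa), and the polar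
   form of x |-> Tr(lambda x^(2^k+1)) turns the inner sum over x into the character
   sum of x |-> Tr(x L(a)), where L is the linearized polynomial of the statement.
   Hence |N_f(mu)|^2 = sum_(L(a) = 0) (-i)^wt(a) (-1)^(f(a) + Tr(mu a)).  When L has
   trivial kernel this is 1; conversely, if it is 1 for every mu, Fourier inversion
   at a nonzero root b of L yields 0 = 2^n (-i)^wt(b) (-1)^f(b), a contradiction. *)

From mathcomp Require Import all_boot all_order all_algebra all_field.
From mathcomp Require Import ring zify.
Import Order.TTheory GRing.Theory Num.Theory.
Set Implicit Arguments. Unset Strict Implicit. Unset Printing Implicit Defensive.
Local Open Scope ring_scope.

Section Char2Trace.
Variables (F : finFieldType) (n : nat).
Hypothesis cardF : #|F| = (2 ^ n)%N.

Lemma pchar2F : 2%N \in [pchar F].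
Proof. exact: card_finPcharP cardF isT. Qed.

Lemma deg_gt0 : (0 < n)%N.
Proof. by move: (finNzRing_gt1 F); rewrite cardF; case: n. Qed.

Lemma exprD_pow2 (x y : F) m : (x + y) ^+ (2 ^ m) = x ^+ (2 ^ m) + y ^+ (2 ^ m).
Proof. by apply: exprDn_pchar; rewrite pnatX (pnatE _ (isT : prime 2)) pchar2F. Qed.

Lemma expf_pow2_card (x : F) j : x ^+ (2 ^ (n * j)) = x.
Proof.
elim: j => [|j IHj]; first by rewrite muln0 expr1.
by rewrite mulnS expnD exprM -cardF expf_card IHj.
Qed.

Lemma natr_bool_inj : injective (fun b : bool => b%:R : F).
Proof. by case; case=> //= /eqP; rewrite ?oner_eq0 // eq_sym oner_eq0. Qed.

Lemma natr_addb (a b : bool) : ((a (+) b)%:R : F) = a%:R + b%:R.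
Proof. by case: a; case: b; rewrite /= ?addr0 ?add0r ?(addrr_pchar2 pchar2F). Qed.

Lemma natr_odd m : ((odd m)%:R : F) = m%:R.
Proof. by rewrite -modn2 (GRing.natr_mod_pchar pchar2F). Qed.

Lemma Tr_add (x y : F) : Tr n (x + y) = Tr n x + Tr n y.
Proof. by rewrite /Tr -big_split; apply: eq_bigr => i _; rewrite exprD_pow2. Qed.

Lemma Tr0 : Tr n (0 : F) = 0.
Proof. by rewrite /Tr big1 // => i _; rewrite expr0n expn_eq0. Qed.

Lemma Tr_sum (I : finType) (G : I -> F) : Tr n (\sum_i G i) = \sum_i Tr n (G i).
Proof. exact: (big_morph _ Tr_add Tr0). Qed.

Lemma Tr_natr_mul (b : bool) (x : F) : Tr n (b%:R * x) = b%:R * Tr n x.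
Proof. by case: b; rewrite ?mul1r ?mul0r ?Tr0. Qed.

Lemma Tr_sqr (x : F) : Tr n (x ^+ 2) = Tr n x.
Proof.
rewrite /Tr; case: n cardF => [|m] cardFm; first by rewrite !big_ord0.
rewrite big_ord_recr [RHS]big_ord_recl /= -exprM -expnS -cardFm expf_card addrC.
by congr (_ + _); apply: eq_bigr => i _; rewrite -exprM -expnS.
Qed.

Lemma Tr_exp2 (x : F) j : Tr n (x ^+ (2 ^ j)) = Tr n x.
Proof. by elim: j => [|j IHj]; rewrite ?expr1 // expnSr exprM Tr_sqr. Qed.

(* The adjoint of [y |-> y ^+ (2 ^ k)] for the trace form is its inverse
   [b |-> b ^+ (2 ^ (n - k %% n))]. *)
Lemma Tr_adjoint_exp2 (y b : F) k :
  Tr n (y ^+ (2 ^ k) * b) = Tr n (y * b ^+ (2 ^ (n - k %% n))).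
Proof.
rewrite -(Tr_exp2 _ (n - k %% n)) exprMn -exprM -expnD.
have -> : (k + (n - k %% n) = n * (k %/ n).+1)%N.
  by have := ltn_pmod k deg_gt0; have := divn_eq k n; rewrite mulnS; lia.
by rewrite expf_pow2_card.
Qed.

(* [Tr x] is fixed by squaring, hence lies in the prime field. *)
Lemma Tr_bool (x : F) : Tr n x = (trb n x)%:R.
Proof.
have Tr_sqr_id : Tr n x ^+ 2 = Tr n x.
  rewrite -(pFrobenius_autE pchar2F) rmorph_sum -[RHS]Tr_sqr.
  by apply: eq_bigr => i _; rewrite /= pFrobenius_autE -!exprM mulnC.
have : Tr n x * (Tr n x - 1) == 0 by rewrite mulrBr mulr1 -expr2 Tr_sqr_id subrr.
rewrite mulf_eq0 subr_eq0 /trb => /orP[/eqP->|/eqP->]; rewrite ?eqxx //.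
by rewrite eq_sym oner_eq0.
Qed.

Lemma trbD (x y : F) : trb n (x + y) = trb n x (+) trb n y.
Proof. by apply: natr_bool_inj; rewrite /= natr_addb -!Tr_bool Tr_add. Qed.

Lemma trb0 : trb n (0 : F) = false.
Proof. by apply: natr_bool_inj; rewrite /= -Tr_bool Tr0. Qed.

End Char2Trace.

Section QuadraticForm.
Variables (F : finFieldType) (n : nat) (lambda : F) (k : nat).
Hypothesis cardF : #|F| = (2 ^ n)%N.

Definition quad_tr (x : F) : bool := trb n (lambda * x ^+ (2 ^ k + 1)).

(* The polar form of [quad_tr] is [Tr (x * (polarL a - a))]; the extra [a]
   absorbs the sign [(-1) ^ Tr (x a)] produced by the nega weights. *)
Definition polarL (a : F) : F :=
  lambda ^+ (2 ^ (n - k %% n)) * a ^+ (2 ^ (n - k %% n)) + lambda * a ^+ (2 ^ k) + a.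

Lemma polarL0 : polarL 0 = 0.
Proof. by rewrite /polarL !expr0n !expn_eq0 !mulr0 !addr0. Qed.

Lemma quad_tr_polar (x a : F) :
  quad_tr x (+) quad_tr (x + a) (+) trb n (x * a) = quad_tr a (+) trb n (x * polarL a).
Proof.
apply: (@natr_bool_inj F); rewrite /= !(natr_addb cardF) -!(Tr_bool cardF).
have expand : lambda * (x + a) ^+ (2 ^ k + 1) = lambda * x ^+ (2 ^ k + 1)
    + x ^+ (2 ^ k) * (lambda * a) + x * (lambda * a ^+ (2 ^ k)) + lambda * a ^+ (2 ^ k + 1).
  by rewrite !exprD !expr1 (exprD_pow2 cardF); ring.
rewrite expand /polarL !mulrDr !(Tr_add cardF) (Tr_adjoint_exp2 cardF) exprMn.
set T := Tr n (lambda * x ^+ _).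
by rewrite -[RHS]add0r -(addrr_pchar2 (pchar2F cardF) T); ring.
Qed.

End QuadraticForm.

Lemma normC_eq1 (z : algC) : `|z| = 1 <-> z * z^* = 1.
Proof.
rewrite -normCK; split => [->|z1]; first by rewrite expr1n.
by apply/eqP; rewrite -(sqrp_eq1 (normr_ge0 z)) z1.
Qed.

Section SelfDualBasis.
Variables (F : finFieldType) (n : nat) (alpha : 'I_n -> F) (coord : F -> 'I_n -> bool).
Hypotheses (cardF : #|F| = (2 ^ n)%N) (alpha_sd : self_dual alpha)
  (coordE : coordinates alpha coord).

Lemma Tr_mul_basis (x : F) j : Tr n (x * alpha j) = (coord x j)%:R.
Proof.
rewrite {1}(coordE x) mulr_suml (Tr_sum cardF) (bigD1 j) //= big1 ?addr0.
  by rewrite -mulrA Tr_natr_mul alpha_sd eqxx mulr1.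
by move=> i neq_ij; rewrite -mulrA Tr_natr_mul alpha_sd (negbTE neq_ij) mulr0.
Qed.

Lemma coord0 j : coord 0 j = false.
Proof. by apply: (@natr_bool_inj F); rewrite /= -Tr_mul_basis mul0r Tr0. Qed.

Lemma coordD (x y : F) j : coord (x + y) j = coord x j (+) coord y j.
Proof.
by apply: (@natr_bool_inj F); rewrite /= (natr_addb cardF) -!Tr_mul_basis mulrDl (Tr_add cardF).
Qed.

Lemma trb_mul_coord (x y : F) :
  trb n (x * y) = odd (\sum_j (coord x j && coord y j)).
Proof.
apply: (@natr_bool_inj F); rewrite /= -(Tr_bool cardF) (natr_odd cardF) natr_sum.
rewrite {1}(coordE y) mulr_sumr (Tr_sum cardF); apply: eq_bigr => j _.
by rewrite mulrCA Tr_natr_mul Tr_mul_basis -natrM; case: (coord x j); case: (coord y j).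
Qed.

Lemma trb_surj : exists c : F, trb n c.
Proof.
exists (alpha (Ordinal (deg_gt0 cardF)) ^+ 2).
by rewrite /trb alpha_sd eqxx.
Qed.

Lemma sum_sign_trb (z : F) :
  \sum_(x : F) (-1) ^+ trb n (x * z) = (if z == 0 then (2 ^ n)%:R else 0) :> algC.
Proof.
have [->|z_neq0] := eqVneq z 0.
  under eq_bigr => x _ do rewrite mulr0 (trb0 cardF).
  by rewrite sumr_const cardF.
have [c trb_c] := trb_surj; pose S := \sum_(x : F) (-1) ^+ trb n (x * z) : algC.
have S_oppr : S = - S.
  rewrite {1}/S (reindex_inj (addIr (c / z))) /=.
  under eq_bigr => x _ do rewrite mulrDl divfK // (trbD cardF) trb_c signr_addb mulrN1.
  by rewrite sumrN.
by move/eqP: S_oppr; rewrite -addr_eq0 -mulr2n mulrn_eq0 => /eqP.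
Qed.

Lemma sum_sign_trb_inversion (h : F -> algC) (b : F) :
  \sum_mu (\sum_a h a * (-1) ^+ trb n (mu * a)) * (-1) ^+ trb n (mu * b)
    = (2 ^ n)%:R * h b.
Proof.
under eq_bigr => mu _ do rewrite mulr_suml.
rewrite exchange_big /=.
under eq_bigr => a _ do under eq_bigr => mu _ do
  rewrite -mulrA -signr_addb -(trbD cardF) -mulrDr.
under eq_bigr => a _ do
  rewrite -mulr_sumr sum_sign_trb addr_eq0 (oppr_pchar2 (pchar2F cardF)).
rewrite (bigD1 b) //= eqxx big1 ?addr0 1?mulrC // => a /negbTE->.
by rewrite mulr0.
Qed.

Lemma expr_wt (c : algC) (x : F) :
  c ^+ wt coord x = \prod_j (if coord x j then c else 1).
Proof. by rewrite /wt -prodr_const big_mkcond; apply: eq_bigr => j _; rewrite inE. Qed.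

Lemma iexp_wt_conjD (x a : F) :
  'i ^+ wt coord x * ('i ^+ wt coord (x + a))^*
    = (- 'i) ^+ wt coord a * (-1) ^+ trb n (x * a) :> algC.
Proof.
rewrite !expr_wt rmorph_prod -big_split (trb_mul_coord x a) signr_odd expr_sum.
rewrite -big_split /=; apply: eq_bigr => j _; rewrite coordD.
case: (coord x j); case: (coord a j) => /=; rewrite ?conjCi ?rmorph1 ?mulr1 ?mul1r //.
  by rewrite mulrN1 opprK.
by rewrite mulrN -expr2 sqrCi opprK.
Qed.

Lemma wt0 : wt coord 0 = 0%N.
Proof. by apply/eqP; rewrite cards_eq0; apply/eqP/setP => j; rewrite !inE coord0. Qed.

Lemma nega_hadamard_mul_conj (f : F -> bool) (mu : F) :
  nega_hadamard coord f mu * (nega_hadamard coord f mu)^*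
    = (2 ^ n)%:R^-1 * \sum_a (- 'i) ^+ wt coord a * (-1) ^+ trb n (mu * a)
        * \sum_x (-1) ^+ (f x (+) f (x + a) (+) trb n (x * a)).
Proof.
rewrite /nega_hadamard; set S := \sum_x _; set w := (sqrtC _)^-1.
have w_ge0 : 0 <= w by rewrite invr_ge0 sqrtC_ge0 exprn_ge0 // ler0n.
have -> : w * S * (w * S)^* = (2 ^ n)%:R^-1 * (S * S^*).
  by rewrite rmorphM /= (geC0_conj w_ge0) mulrACA -invfM -expr2 sqrtCK natrX.
congr (_ * _); rewrite {2}/S rmorph_sum big_distrl /=.
under eq_bigr => x _ do rewrite big_distrr (reindex_inj (addrI x)) /=.
rewrite exchange_big; apply: eq_bigr => a _; rewrite mulr_sumr.
apply: eq_bigr => x _; rewrite rmorphM rmorph_sign mulrACA iexp_wt_conjD.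
rewrite -signr_addb mulrCA -signr_addb -mulrA -signr_addb mulrDr (trbD cardF).
congr (_ * _ ^+ _).
by case: (f x); case: (f (x + a)); case: (trb n (mu * x));
  case: (trb n (mu * a)); case: (trb n (x * a)).
Qed.

Lemma nega_hadamard_quad_mul_conj (lambda : F) k (mu : F) :
  let N := nega_hadamard coord (quad_tr n lambda k) mu in
  N * N^* = \sum_(a | polarL n lambda k a == 0)
              (- 'i) ^+ wt coord a * (-1) ^+ quad_tr n lambda k a * (-1) ^+ trb n (mu * a).
Proof.
rewrite /= nega_hadamard_mul_conj [RHS]big_mkcond mulr_sumr; apply: eq_bigr => a _ /=.
under eq_bigr => x _ do rewrite (quad_tr_polar _ _ cardF) signr_addb.
rewrite -mulr_sumr sum_sign_trb; case: eqP => _; last by rewrite !mulr0.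
by field; rewrite pnatr_eq0 expn_eq0.
Qed.

Lemma negabent_quad_trP (lambda : F) k :
  negabent coord (quad_tr n lambda k)
  <-> (forall a : F, a != 0 -> polarL n lambda k a != 0).
Proof.
split => [negabent_f b b_neq0 | L_inj mu]; last first.
  apply/normC_eq1; rewrite nega_hadamard_quad_mul_conj (big_pred1 0) => [|a /=].
    by rewrite wt0 /quad_tr expr0n addn1 !mulr0 !(trb0 cardF) !mulr1.
  have [->|a_neq0] := eqVneq a 0; first by rewrite polarL0 eqxx.
  by rewrite (negbTE (L_inj a a_neq0)).
apply/eqP => Lb0.
pose h (a : F) : algC := if polarL n lambda k a == 0
  then (- 'i) ^+ wt coord a * (-1) ^+ quad_tr n lambda k a else 0.
have h_sum1 mu : \sum_a h a * (-1) ^+ trb n (mu * a) = 1.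
  rewrite -[RHS](iffLR (normC_eq1 _) (negabent_f mu)) nega_hadamard_quad_mul_conj.
  by rewrite [RHS]big_mkcond; apply: eq_bigr => a _; rewrite /h; case: ifP; rewrite ?mul0r.
have := sum_sign_trb_inversion h b.
under eq_bigr => mu _ do rewrite h_sum1 mul1r.
rewrite sum_sign_trb (negbTE b_neq0) /h Lb0 eqxx => /esym/eqP.
by apply/negP; rewrite !mulf_neq0 ?expf_neq0 ?oppr_eq0 ?neq0Ci ?signr_eq0 ?pnatr_eq0 ?expn_eq0 ?oner_eq0.
Qed.

End SelfDualBasis.

(* None of [1 <= n] (implied by [#|F| = 2 ^ n]), [1 <= k] and [lambda != 0] is needed. *)
Theorem proposition2 (F : finFieldType) (n k : nat)
  (alpha : 'I_n -> F) (coord : F -> 'I_n -> bool) (lambda : F) :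
  (1 <= n)%N -> (1 <= k)%N -> #|F| = (2 ^ n)%N ->
  self_dual alpha -> coordinates alpha coord ->
  lambda != 0 ->
  negabent coord (fun x : F => trb n (lambda * x ^+ (2 ^ k + 1))) <->
  (forall a : F, a != 0 ->
     lambda ^+ (2 ^ (n - k %% n)) * a ^+ (2 ^ (n - k %% n))
       + lambda * a ^+ (2 ^ k) + a != 0).
Proof.
move=> _ _ cardF alpha_sd coordE _.
exact: (negabent_quad_trP cardF alpha_sd coordE).
Qed.
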